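(* Let $S,T$ be numerical semigroups, $w\ge1$ an integer and $f(x)\in\mathbb Z[x]$ such that $\mathrm H_S(x^w)f(x)=\mathrm H_T(x)$. Then (a) $f(0)=1$; (b) $f(1)=w$; (c) $f'(1)=w\bigl(\mathrm g(T)-w\,\mathrm g(S)+(w-1)/2\bigr)$; (d) $\mathrm F(T)=w\,\mathrm F(S)+\deg(f)$.
   Context: A numerical semigroup is a submonoid $S$ of $(\mathbb N,+)$ with $\mathbb N\setminus S$ finite. $\mathrm H_S(x)=\sum_{s\in S}x^s$ is its Hilbert series, $\mathrm F(S)$ its Frobenius number (largest integer not in $S$), and $\mathrm g(S)=\#(\mathbb N\setminus S)$ its genus. *)

From mathcomp Require Import all_boot all_order all_algebra.
Set Implicit Arguments. Unset Strict Implicit. Unset Printing Implicit Defensive.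
Import GRing.Theory Num.Theory.
Local Open Scope ring_scope.

(* The field [ns_cond] is a witness bound beyond which every integer is in S
   (any such bound; the notions below do not depend on its choice). *)
Record numsg := NumSg {
  ns_mem :> nat -> bool;
  ns_0 : ns_mem 0%N;
  ns_add : forall a b, ns_mem a -> ns_mem b -> ns_mem (a + b)%N;
  ns_cond : nat;
  ns_condP : forall n, (ns_cond <= n)%N -> ns_mem n
}.

(* genus: number of gaps (all gaps are < ns_cond). *)
Definition genus (S : numsg) : nat :=
  count (fun n => ~~ S n) (iota 0 (ns_cond S)).

(* Frobenius number: largest integer not in S (= -1 if S = N). *)
Definition frobenius (S : numsg) : int :=
  ((\max_(n < ns_cond S | ~~ S n) n.+1)%N)%:Z - 1.

(* Coefficient of x^n in H_S(x^w) = sum_{s in S} x^(w s). *)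
Definition hilb_pow_coef (S : numsg) (w n : nat) : int :=
  if (w %| n)%N && S (n %/ w)%N then 1 else 0.

(* Coefficient of x^n in H_S(x^w) * f(x). *)
Definition hilb_pow_mul_coef (S : numsg) (w : nat) (f : {poly int}) (n : nat) : int :=
  \sum_(i < n.+1) f`_i * hilb_pow_coef S w (n - i).

(* Coefficient of x^n in H_T(x). *)
Definition hilb_coef (T : numsg) (n : nat) : int := if T n then 1 else 0.

From mathcomp Require Import all_boot all_order all_algebra.
From mathcomp Require Import zify ring.
Import GRing.Theory Num.Theory.
Local Open Scope ring_scope.

Set Implicit Arguments.
Unset Strict Implicit.
Unset Printing Implicit Defensive.

(* With G_S(x) the sum of x^g over the gaps g of S, H_S(x) = 1/(1 - x) - G_S(x), so
   the numerator N_S(x) = (1 - x) H_S(x) = 1 - (1 - x) G_S(x) is a polynomial with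
   N_S(1) = 1, N_S'(1) = g(S) and deg N_S = F(S) + 1. Multiplying the hypothesis by
   1 - x^w = (1 - x)(1 + x + ... + x^(w-1)) turns it into the polynomial identity
   f(x) N_S(x^w) = (1 + x + ... + x^(w-1)) N_T(x).  Evaluating it and its derivative
   at 1 and comparing degrees gives (b), (c) and (d); (a) is the constant term of the
   hypothesis.  The power series identity is transported to polynomials through
   truncations, since the truncation of a product only depends on those of its factors. *)

Section TakePoly.
Variable R : nzSemiRingType.
Implicit Types p q : {poly R}.

Lemma size_poly_coef_last p d :
  p`_d != 0 -> (forall j, (d < j)%N -> p`_j = 0) -> size p = d.+1.
Proof.
move=> pd0 p_hi; apply/anti_leq; rewrite ltnNge; apply/andP; split.
  exact/leq_sizeP.
by apply: contra pd0 => /leq_sizeP/(_ d (leqnn d))->.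
Qed.

Lemma take_polyMr_take m p q : take_poly m (q * take_poly m p) = take_poly m (q * p).
Proof.
apply/polyP => i; rewrite !coef_take_poly; case: ifP => // im.
rewrite !coefM; apply: eq_bigr => j _; rewrite coef_take_poly.
by rewrite (leq_ltn_trans (leq_subr j i) im).
Qed.

Lemma poly_eq_take p q : (forall m, take_poly m p = take_poly m q) -> p = q.
Proof.
move=> eq_pq; apply/polyP => i.
by have := congr1 (fun r : {poly R} => r`_i) (eq_pq i.+1); rewrite /= !coef_take_poly ltnSn.
Qed.

End TakePoly.

(* F(S) + 1, so that [frobenius S] is [conductor S - 1] by definition. *)
Definition conductor (S : numsg) : nat := \max_(n < ns_cond S | ~~ S n) n.+1.

Definition gap_poly (S : numsg) (w : nat) : {poly int} :=
  \sum_(g < ns_cond S | ~~ S g) 'X^(w * g).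

(* (1 - x^w) H_S(x^w) *)
Definition hilb_numer (S : numsg) (w : nat) : {poly int} :=
  1 - (1 - 'X^w) * gap_poly S w.

Definition hilb_trunc (S : numsg) (w N : nat) : {poly int} :=
  \poly_(i < N) hilb_pow_coef S w i.

Definition geom_poly (w : nat) : {poly int} := \sum_(i < w) 'X^i.

Section Gaps.
Variable S : numsg.

Lemma gap_lt_cond g : ~~ S g -> (g < ns_cond S)%N.
Proof. by apply: contraR; rewrite -leqNgt => /ns_condP. Qed.

Lemma gap_lt_conductor g : ~~ S g -> (g < conductor S)%N.
Proof.
move=> gS; exact: (@leq_bigmax_cond _ (fun n : 'I_(ns_cond S) => ~~ S n) (fun n => n.+1)
  (Ordinal (gap_lt_cond gS)) gS).
Qed.

Lemma conductor_pred_gap : (0 < conductor S)%N -> ~~ S (conductor S).-1.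
Proof.
rewrite /conductor; have [g gS | no_gap] := pickP (fun n : 'I_(ns_cond S) => ~~ S n).
  by rewrite (@bigmax_eq_arg _ g (fun n => ~~ S n) (fun n => n.+1) gS); case: arg_maxnP.
by rewrite big_pred0.
Qed.

Lemma genusE : \sum_(g < ns_cond S | ~~ S g) (1 : int) = (genus S)%:R.
Proof.
rewrite /genus -sum1_count natr_sum -(big_mkord (fun g => ~~ S g) (fun _ => 1)).
by rewrite /index_iota subn0.
Qed.

Variable w : nat.
Hypothesis w_gt0 : (0 < w)%N.

Lemma coef_gap_poly n : (gap_poly S w)`_n = ((w %| n)%N && ~~ S (n %/ w)%N)%:R.
Proof.
rewrite /gap_poly coef_sum; under eq_bigr => g _ do rewrite coefXn.
have [/andP [/dvdnP [q ->] qS] | n_gap] := boolP ((w %| n)%N && ~~ S (n %/ w)%N).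
  rewrite mulnK // in qS *; rewrite (bigD1 (Ordinal (gap_lt_cond qS))) //= mulnC eqxx.
  rewrite big1 ?addr0 // => g /andP [_ gq]; case: eqP => // /eqP.
  by rewrite eqn_mul2l eqn0Ngt w_gt0 /= => /eqP qE; rewrite -val_eqE /= qE eqxx in gq.
rewrite big1 // => g gS; case: eqP => // nE.
by move: n_gap; rewrite nE mulKn // gS andbT dvdn_mulr.
Qed.

Lemma hilb_pow_coefE n : hilb_pow_coef S w n = (w %| n)%N%:R - (gap_poly S w)`_n.
Proof.
rewrite coef_gap_poly /hilb_pow_coef.
by case: (w %| n)%N; case: (S (n %/ w)%N); rewrite /= ?subr0 ?subrr.
Qed.

Lemma size_gap_poly : (0 < conductor S)%N ->
  size (gap_poly S w) = (w * (conductor S).-1).+1.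
Proof.
move=> c_gt0; apply: size_poly_coef_last => [|j].
  by rewrite coef_gap_poly dvdn_mulr // mulKn // conductor_pred_gap.
rewrite coef_gap_poly; have [/andP [/dvdnP [q ->] qS] | //] := boolP (_ && _).
move: qS; rewrite mulnK // => /gap_lt_conductor; nia.
Qed.

Lemma size_hilb_numer : size (hilb_numer S w) = (w * conductor S).+1.
Proof.
rewrite /hilb_numer; have [c0 | c_gt0] := posnP (conductor S).
  have -> : gap_poly S w = 0.
    by apply: big1 => g /gap_lt_conductor; rewrite c0.
  by rewrite mulr0 subr0 size_poly1 c0 muln0.
have G_neq0 : gap_poly S w != 0 by rewrite -size_poly_gt0 size_gap_poly.
rewrite mulrBl mul1r opprB addrCA [_ * gap_poly S w]mulrC size_polyDl size_mulXn //.
  by rewrite size_gap_poly // addnS -mulnS prednK.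
rewrite size_gap_poly //; apply: leq_ltn_trans (size_polyD _ _) _.
by rewrite size_poly1 size_polyN size_gap_poly // gtn_max; apply/andP; split; lia.
Qed.

Lemma take_hilb_numer N :
  take_poly N ((1 - 'X^w) * hilb_trunc S w N) = take_poly N (hilb_numer S w).
Proof.
apply/polyP => n; rewrite !coef_take_poly; case: ifP => // nN.
rewrite /hilb_numer !mulrBl !mul1r !(coefB, coefXnM, coef1) !coef_poly nN.
rewrite !hilb_pow_coefE; case: ltnP => [n_lt_w | w_le_n].
  have -> : (w %| n)%N = (n == 0)%N.
    by apply/idP/eqP => [/dvdnP [[|q] nE] | ->]; rewrite ?dvdn0 //; lia.
  by rewrite !subr0.
have -> : (n - w < N)%N by lia.
rewrite -[in (w %| n)%N](subnK w_le_n) dvdn_addl ?dvdnn //.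
have -> : (n == 0)%N = false by lia.
by rewrite /=; ring.
Qed.

End Gaps.

Lemma horner_gap_poly S w : (gap_poly S w).[1] = (genus S)%:R.
Proof.
by rewrite /gap_poly horner_sum -genusE; apply: eq_bigr => g _; rewrite hornerXn expr1n.
Qed.

Lemma horner_hilb_numer S w : (hilb_numer S w).[1] = 1.
Proof. by rewrite /hilb_numer !hornerE expr1n subrr mul0r subr0. Qed.

Lemma deriv_hilb_numer S w : (hilb_numer S w)^`().[1] = (w * genus S)%:R.
Proof.
rewrite /hilb_numer !derivE !hornerE horner_gap_poly expr1n subrr.
by rewrite mul0r addr0 mulNr opprK hornerMn hornerXn expr1n natrM.
Qed.

Lemma sub1Xn_geom w : 1 - 'X^w = (1 - 'X) * geom_poly w.
Proof.
rewrite -[in LHS](expr1n {poly int} w) subrXX /geom_poly; congr (_ * _).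
by apply: eq_bigr => i _; rewrite expr1n mul1r.
Qed.

Lemma size_geom_poly w : size (geom_poly w) = w.
Proof.
case: w => [|w]; first by rewrite /geom_poly big_ord0 size_poly0.
have size_sub1Xn : size (1 - 'X^(w.+1) : {poly int}) = w.+2.
  by rewrite -opprB size_polyN -polyC1 size_XnsubC.
have size_sub1X : size (1 - 'X : {poly int}) = 2.
  by rewrite -opprB size_polyN -polyC1 size_XsubC.
have geom_neq0 : geom_poly w.+1 != 0.
  by apply/eqP => Q0; have := size_sub1Xn; rewrite sub1Xn_geom Q0 mulr0 size_poly0.
have := congr1 (fun p : {poly int} => size p) (sub1Xn_geom w.+1).
by rewrite /= size_sub1Xn size_mul // -?size_poly_eq0 ?size_sub1X // => -[].
Qed.

Lemma horner_geom_poly w : (geom_poly w).[1] = w%:R.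
Proof.
rewrite /geom_poly horner_sum (eq_bigr (fun _ => 1)) => [|i _]; last by rewrite hornerXn expr1n.
by rewrite sumr_const card_ord.
Qed.

Lemma deriv_geom_poly w : 2 * (geom_poly w)^`().[1] = w%:Z * (w%:Z - 1).
Proof.
elim: w => [|w IHw]; first by rewrite /geom_poly big_ord0 deriv0 horner0 mulr0 mul0r.
rewrite /geom_poly big_ord_recr /= derivD hornerD mulrDr -/(geom_poly w) IHw.
rewrite derivXn hornerMn hornerXn expr1n -natz; ring.
Qed.

Lemma take_hilb_trunc_mul S T w f :
  (forall n, hilb_pow_mul_coef S w f n = hilb_coef T n) ->
  forall N, take_poly N (f * hilb_trunc S w N) = hilb_trunc T 1 N.
Proof.
move=> hilbE N; apply/polyP => n; rewrite coef_take_poly coef_poly; case: ifP => // nN.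
have -> : hilb_pow_coef T 1 n = hilb_coef T n by rewrite /hilb_pow_coef dvd1n divn1.
rewrite -hilbE coefM; apply: eq_bigr => j _.
by rewrite coef_poly (leq_ltn_trans (leq_subr j n) nN).
Qed.

Lemma mul_hilb_numer S T w f : (0 < w)%N ->
  (forall n, hilb_pow_mul_coef S w f n = hilb_coef T n) ->
  f * hilb_numer S w = geom_poly w * hilb_numer T 1.
Proof.
move=> w_gt0 hilbE; apply: poly_eq_take => N.
rewrite -take_polyMr_take -(take_hilb_numer _ w_gt0) take_polyMr_take mulrCA.
rewrite -take_polyMr_take (take_hilb_trunc_mul hilbE) sub1Xn_geom -mulrA mulrCA.
by rewrite -take_polyMr_take -[in 1 - 'X](expr1 'X) take_hilb_numer // take_polyMr_take.
Qed.

Section HilbNumerIdentity.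
Variables (S T : numsg) (w : nat) (f : {poly int}).
Hypotheses (w_gt0 : (0 < w)%N)
  (numerE : f * hilb_numer S w = geom_poly w * hilb_numer T 1).

Lemma horner1_hilb_factor : f.[1] = w%:Z.
Proof.
have := congr1 (horner^~ 1) numerE.
by rewrite /= !hornerM !horner_hilb_numer horner_geom_poly !mulr1 natz.
Qed.

Lemma deriv1_hilb_factor :
  ((f^`()).[1])%:~R = (w%:R : rat) * ((genus T)%:R - w%:R * (genus S)%:R + (w%:R - 1) / 2).
Proof.
have := congr1 (fun p => p^`().[1]) numerE.
rewrite /= !derivM !hornerD !hornerM !horner_hilb_numer !deriv_hilb_numer.
rewrite horner_geom_poly horner1_hilb_factor !mulr1 mul1n => /(canRL (addrK _)) ->.
have geom2 := congr1 (intr : int -> rat) (deriv_geom_poly w).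
rewrite /= !rmorphM !rmorphD rmorphN1 in geom2.
rewrite !rmorphB !rmorphD !rmorphM /= !rmorph_nat -!pmulrn.
have -> : ((geom_poly w)^`().[1])%:~R = w%:R * (w%:R - 1) / 2 :> rat.
  by rewrite -geom2; field.
by field.
Qed.

Lemma frobenius_hilb_factor : frobenius T = w%:Z * frobenius S + ((size f).-1)%:Z.
Proof.
have f_neq0 : f != 0.
  by apply: contra_eq_neq horner1_hilb_factor => ->; rewrite horner0; lia.
have numer_neq0 X u : (0 < u)%N -> hilb_numer X u != 0.
  by move=> u_gt0; rewrite -size_poly_eq0 size_hilb_numer.
have geom_neq0 : geom_poly w != 0 by rewrite -size_poly_eq0 size_geom_poly -lt0n.
have := congr1 (fun p : {poly int} => size p) numerE.
rewrite /= !size_mul ?numer_neq0 // !size_hilb_numer // size_geom_poly mul1n.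
rewrite /frobenius -/(conductor S) -/(conductor T).
have : (0 < size f)%N by rewrite size_poly_gt0.
by case: (size f) => [|s] //= _; rewrite addnS /=; lia.
Qed.

End HilbNumerIdentity.

Theorem lemma12 (S T : numsg) (w : nat) (f : {poly int}) :
  (1 <= w)%N ->
  (forall n : nat, hilb_pow_mul_coef S w f n = hilb_coef T n) ->
  [/\ f.[0] = 1,
      f.[1] = w%:Z,
      ((f^`()).[1])%:~R = (w%:R : rat) * ((genus T)%:R - w%:R * (genus S)%:R
                                          + (w%:R - 1) / 2)
    & frobenius T = w%:Z * frobenius S + ((size f).-1)%:Z].
Proof.
move=> w_gt0 hilbE; have numerE := mul_hilb_numer w_gt0 hilbE.
split; [|exact: horner1_hilb_factor numerE|exact: deriv1_hilb_factor numerE|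
  exact: frobenius_hilb_factor w_gt0 numerE].
have := hilbE 0%N; rewrite /hilb_pow_mul_coef big_ord1 /hilb_pow_coef /hilb_coef.
by rewrite dvdn0 div0n !ns_0 mulr1 horner_coef0.
Qed.
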